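(* For every positive integer $r$, $\delta(3r+1) \ge r$.
   Context: A double-$n$ string is a string of length $2n$ over an alphabet of $n$ symbols in which each symbol appears exactly twice. Positions in the string are numbered $1,\dots,2n$. The distance between two distinct symbols is the minimum, over an occurrence of the first symbol and an occurrence of the second, of the absolute difference of their positions (so adjacent entries have distance $1$). The diameter of a double-$n$ string ($n\ge 2$) is the maximum of the distance over all pairs of distinct symbols. $\delta(n)$ denotes the minimum diameter over all double-$n$ strings. *)

From mathcomp Require Import all_boot.
Set Implicit Arguments. Unset Strict Implicit. Unset Printing Implicit Defensive.

(* A string of length 2n over symbols 'I_n is a finite function
   s : 'I_(2n) -> 'I_n (positions 0..2n-1 instead of 1..2n; distances
   are differences of positions, so the shift is irrelevant). *)
Definition str (n : nat) := {ffun 'I_(2 * n) -> 'I_n}.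

Definition is_double (n : nat) (s : str n) : bool :=
  [forall a : 'I_n, #|[pred i | s i == a]| == 2].

Definition absdiff (i j : nat) : nat := (i - j) + (j - i).

(* distance between symbols a and b: minimum of |i - j| over positions
   i with s i = a and j with s j = b.  (For a double string both sets
   are non-empty; the default value 2n of the fold is never attained
   then since all differences are < 2n.) *)
Definition dist (n : nat) (s : str n) (a b : 'I_n) : nat :=
  \big[minn/(2 * n)]_(i : 'I_(2 * n) | s i == a)
     \big[minn/(2 * n)]_(j : 'I_(2 * n) | s j == b) absdiff i j.

Definition diameter (n : nat) (s : str n) : nat :=
  \max_(a : 'I_n) \max_(b : 'I_n | a != b) dist s a b.

Definition has_double_with_diam (n d : nat) : bool :=
  [exists s : str n, is_double s && (diameter s == d)].

Lemma half_lt (n : nat) (i : 'I_(2 * n)) : i./2 < n.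
Proof. by rewrite ltn_half_double -mul2n ltn_ord. Qed.

Definition canon (n : nat) : str n := [ffun i => Ordinal (half_lt i)].

Lemma canon_double (n : nat) : is_double (canon n).
Proof.
apply/forallP => a.
have h0 : a.*2 < 2 * n by rewrite mul2n ltn_double.
have h1 : a.*2.+1 < 2 * n by rewrite mul2n ltn_Sdouble.
rewrite (@eq_card _ _ (pred2 (Ordinal h0) (Ordinal h1))).
  by rewrite card2 -(inj_eq val_inj) /= neq_ltn ltnSn.
move=> i; rewrite !inE ffunE -!(inj_eq val_inj) /=.
apply/eqP/orP.
  move=> <-; have e := odd_double_half i.
  by case: (odd i) e => /= e; [right|left]; rewrite -[X in X == _]e.
case=> /eqP ->; first by rewrite doubleK.
by rewrite -addn1 -[X in _ + X]/(nat_of_bool true) addnC half_bit_double.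
Qed.

Lemma double_exists (n : nat) : exists d, has_double_with_diam n d.
Proof.
exists (diameter (canon n)); apply/existsP; exists (canon n).
by rewrite canon_double eqxx.
Qed.

Definition delta (n : nat) : nat := ex_minn (double_exists n).

From mathcomp Require Import all_boot zify.
Set Implicit Arguments. Unset Strict Implicit. Unset Printing Implicit Defensive.

(* We prove the more general bound  k <= delta n  whenever 0 < k and
   3k <= n + 1; the theorem is the case n = 3r + 1, k = r.

   Fix a double-n string s, let a be the symbol at position 0 and p its
   other position, and let F be the set of positions at distance >= k
   from both occurrences of a.
   - If two distinct positions of F carry the same symbol b, then both
     occurrences of b lie in F, so dist(a, b) >= k and we are done.
   - Otherwise s is injective on F, and F avoids the symbol a, so
     #|F| <= n - 1.  The complement of F lies within distance < k of
     position 0 (at most k positions) or of p (at most 2k - 1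
     positions), so 2n <= (n - 1) + (3k - 1), contradicting 3k <= n + 1.
   The file first gives lower-bound tools for dist and diameter, then
   counting facts about neighbourhoods of a position, then the
   structure of occurrences in a double string, and finally the
   argument above. *)

Definition occ (n : nat) (s : str n) (b : 'I_n) : {set 'I_(2 * n)} :=
  [set j | s j == b].

Definition far (n : nat) (s : str n) (a : 'I_n) (k : nat) : {set 'I_(2 * n)} :=
  [set j : 'I_(2 * n) | [forall i, (s i == a) ==> (k <= absdiff i j)]].

Definition near (N i k : nat) : {set 'I_N} := [set j : 'I_N | absdiff i j < k].

(* A uniform lower bound on the distances between the occurrences of a
   and b bounds dist s a b (the bound must not exceed the default 2n). *)
Lemma dist_lower_bound (n : nat) (s : str n) (a b : 'I_n) (k : nat) :
  k <= 2 * n ->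
  (forall i j : 'I_(2 * n), s i = a -> s j = b -> k <= absdiff i j) ->
  k <= dist s a b.
Proof.
move=> k_le bound; rewrite /dist.
have min_closed x y : k <= x -> k <= y -> k <= minn x y.
  by move=> kx ky; rewrite leq_min kx ky.
apply: (big_ind (fun x => k <= x)) => // i /eqP si.
apply: (big_ind (fun x => k <= x)) => // j /eqP sj.
exact: bound.
Qed.

Lemma dist_le_diameter (n : nat) (s : str n) (a b : 'I_n) :
  a != b -> dist s a b <= diameter s.
Proof.
move=> ab; rewrite /diameter.
apply: leq_trans (leq_bigmax_cond (F := dist s a) b ab) _.
exact: (leq_bigmax (F := fun a => \max_(b | a != b) dist s a b) a).
Qed.

Lemma card_in_interval (N lo len : nat) (A : {set 'I_N}) :
  (forall j, j \in A -> lo <= j < lo + len) -> #|A| <= len.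
Proof.
move=> inA; rewrite cardE -(size_map val) -[len](size_iota lo).
apply: uniq_leq_size; first by rewrite map_inj_uniq ?enum_uniq //; exact: val_inj.
move=> _ /mapP [j jA ->]; rewrite mem_iota; apply: inA.
by rewrite -mem_enum.
Qed.

Lemma card_near0 (N k : nat) : #|near N 0 k| <= k.
Proof.
apply: (@card_in_interval _ 0) => j; rewrite inE /absdiff; lia.
Qed.

Lemma card_near (N i k : nat) : #|near N i k| <= (2 * k).-1.
Proof.
apply: (@card_in_interval _ (i - k.-1)) => j; rewrite inE /absdiff; lia.
Qed.

Lemma occ_pair (n : nat) (s : str n) (i : 'I_(2 * n)) :
  is_double s -> exists p, occ s (s i) = [set i; p].
Proof.
move=> /forallP /(_ (s i)) two.
have [x [y [xy occE]]] : exists x y, x != y /\ occ s (s i) = [set x; y].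
  by apply/cards2P; rewrite cardsE.
have : i \in occ s (s i) by rewrite inE.
rewrite occE !inE => /orP [] /eqP ->; first by exists y.
by exists x; rewrite setUC.
Qed.

Lemma far_avoids (n : nat) (s : str n) (a : 'I_n) (k : nat) (j : 'I_(2 * n)) :
  0 < k -> j \in far s a k -> s j != a.
Proof.
move=> k_gt0; rewrite inE => /forallP /(_ j); apply: contraL => ->.
by rewrite /absdiff subnn -ltnNge.
Qed.

(* Two distinct far positions carrying the same symbol b are all the
   occurrences of b, so b is at distance >= k from a. *)
Lemma far_collision_dist (n : nat) (s : str n) (a : 'I_n) (k : nat)
    (j1 j2 : 'I_(2 * n)) :
  is_double s -> k <= 2 * n -> j1 \in far s a k -> j2 \in far s a k ->
  j1 != j2 -> s j1 = s j2 -> k <= dist s a (s j1).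
Proof.
move=> dbl k_le far1 far2 j12 s12.
have [p occE] := occ_pair j1 dbl.
have j2p : j2 = p.
  have : j2 \in occ s (s j1) by rewrite inE s12.
  by rewrite occE !inE eq_sym (negbTE j12) => /eqP.
have occ_far j : s j = s j1 -> j \in far s a k.
  move=> sj; have : j \in occ s (s j1) by rewrite inE sj.
  by rewrite occE in_set2 -j2p => /orP [] /eqP ->.
apply: dist_lower_bound => // i j si sj.
by move: (occ_far j sj); rewrite inE => /forallP /(_ i); rewrite si eqxx.
Qed.

Lemma pigeonhole (T U : finType) (f : T -> U) (A : {set T}) (B : {set U}) :
  f @: A \subset B -> #|B| < #|A| ->
  exists x y, [/\ x \in A, y \in A, x != y & f x = f y].
Proof.
move=> fAB ltBA.
have /dinjectivePn [x xA [y /andP [yx yA] fxy]] : ~~ dinjectiveb f A.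
  apply/dinjectiveP => inj.
  by move: (subset_leq_card fAB); rewrite (card_in_imset inj) leqNgt ltBA.
by exists x, y; rewrite eq_sym.
Qed.

Lemma not_far_near (n : nat) (s : str n) (k : nat) (i p : 'I_(2 * n)) :
  occ s (s i) = [set i; p] -> ~: far s (s i) k \subset near _ i k :|: near _ p k.
Proof.
move=> occE; apply/subsetP => j; rewrite !inE => /forallPn [i'].
rewrite negb_imply -ltnNge => /andP [si' close].
have : i' \in occ s (s i) by rewrite inE.
by rewrite occE !inE => /orP [] /eqP <-; rewrite close ?orbT.
Qed.

Lemma far_symbols_exist (n k : nat) (s : str n) :
  0 < k -> 3 * k <= n.+1 -> is_double s ->
  exists a b, a != b /\ k <= dist s a b.
Proof.
move=> k_gt0 k_le dbl.
have pos0 : 0 < 2 * n by lia.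
pose o0 := Ordinal pos0; pose F := far s (s o0) k.
case: (boolP (n.-1 < #|F|)) => [bigF | smallF].
  have F_avoids : s @: F \subset [set~ s o0].
    by apply/subsetP => _ /imsetP [j jF ->]; rewrite !inE (far_avoids k_gt0 jF).
  have [|j1 [j2 [f1 f2 j12 s12]]] := pigeonhole F_avoids.
    by rewrite cardsC1 card_ord.
  exists (s o0), (s j1); split; first by rewrite eq_sym (far_avoids k_gt0 f1).
  have k_le2n : k <= 2 * n by lia.
  exact: far_collision_dist dbl k_le2n f1 f2 j12 s12.
have [p occE] := occ_pair o0 dbl.
have nearF : #|~: F| <= k + (2 * k).-1.
  apply: leq_trans (subset_leq_card (not_far_near k occE)) _.
  apply: leq_trans (leq_card_setU _ _) _.
  by apply: leq_add; [exact: card_near0 | exact: card_near].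
have := cardsC F; rewrite card_ord; lia.
Qed.

Lemma delta_lower_bound (n k : nat) : 0 < k -> 3 * k <= n.+1 -> k <= delta n.
Proof.
move=> k_gt0 k_le; rewrite /delta; case: ex_minnP => d /existsP [s].
move=> /andP [dbl /eqP <-] _.
have [a [b [ab kd]]] := far_symbols_exist k_gt0 k_le dbl.
exact: leq_trans kd (dist_le_diameter s ab).
Qed.

Theorem lemma3p2 (r : nat) : 0 < r -> r <= delta (3 * r + 1).
Proof. by move=> r_gt0; apply: delta_lower_bound; lia. Qed.
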